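(* Assume that $M\in\omega$ and $\mu:\mathcal P(2^{\omega})\to\omega\cup\{\infty\}$ is a monotone, subadditive function such that (i) $\mu(U)=\infty$ for each non-empty clopen $U\subseteq 2^{\omega}$; (ii) for each $a,b\subseteq 2^{\omega}$, if $\mu(a)\le M<\mu(b)$, then $\sup\{\mu(b\setminus U)+M: a\subseteq U,\ U \text{ clopen in } 2^{\omega}\}\ge \mu(b)$. Then $\mathbb H(\mu)$ is dense, shrinkable and $\mathbb G(\mu,M)$-large.
   Context: For $n\in\omega$ let $C_n=\{n\}\times 2^{\omega}$ and $C=\bigcup_{n<\omega}C_n$ (with the Euclidean topology). For $\mu:\mathcal P(2^\omega)\to\omega\cup\{\infty\}$ and $n\in\omega$ define $\mu^{(n)}:\mathcal P(C_n)\to\omega\cup\{\infty\}$ by $\mu^{(n)}(A)=\mu(\{x:\langle n,x\rangle\in A\})$. Let $\mathbb E$ be the set of functions $e$ with $\mathrm{dom}(e)$ an infinite subset of $\omega$ and $\emptyset\ne e(n)\subseteq C_n$ for each $n\in\mathrm{dom}(e)$; let $\mathbb O=\{o\in\mathbb E: o(n)$ is clopen in $C_n$ for each $n\in\mathrm{dom}(o)\}$. For $f,g\in\mathbb E$: $f\sqsubset g$ iff $\mathrm{dom}(f)\subseteq\mathrm{dom}(g)$ and $f(n)\subseteq g(n)$ for all $n\in\mathrm{dom}(f)$; $f\sqsubset^* g$ iff $\mathrm{dom}(f)\setminus\mathrm{dom}(g)$ is finite and $\{n\in\mathrm{dom}(f): f(n)\not\subseteq g(n)\}$ is finite; $f\perp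 g$ iff $\{n\in\mathrm{dom}(f)\cap\mathrm{dom}(g): f(n)\cap g(n)\ne\emptyset\}$ is finite. For $h\in\mathbb E$, $o\in\mathbb O$, the function $h\dotminus o$ has domain $\{n\in\mathrm{dom}(h): h(n)\not\subseteq o(n)\}$ (where $n\notin\mathrm{dom}(o)$ counts as $h(n)\not\subseteq o(n)$), with $(h\dotminus o)(n)=h(n)\setminus o(n)$ if $n\in\mathrm{dom}(o)$ and $=h(n)$ otherwise. $\mathbb G(\mu,M)=\{g\in\mathbb E:\mu^{(n)}(g(n))\le M$ for each $n\in\mathrm{dom}(g)\}$ and $\mathbb H(\mu)=\{h\in\mathbb E:\lim_{n\in\mathrm{dom}(h)}\mu^{(n)}(h(n))=\infty\}$. For $\mathbb G,\mathbb H\subseteq\mathbb E$: $\mathbb H$ is dense iff for each $o\in\mathbb O$ there is $h\in\mathbb H$ with $h\sqsubset o$; $\mathbb H$ is shrinkable iff for each $h\in\mathbb H$ and each countably infinite $\mathcal O\subseteq\mathbb O$ there is $h'\in\mathbb H$ with $h'\sqsubset h$ and, for all $o\in\mathcal O$, $h'\sqsubset^* o$ or $h'\perp o$; $\mathbb H$ is $\mathbb G$-large iff for each $g\in\mathbb G$ and each countably infinite $\mathcal H\subseteq\mathbb H$ there is $o\in\mathbb O$ with $g\sqsubset o$ and $h\dotminus o\in\mathbb H$ for every $h\in\mathcal H$. *)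

From HB Require Import structures.
From mathcomp Require Import all_boot all_order all_algebra.
From mathcomp Require Import all_classical all_reals all_analysis.
Set Implicit Arguments. Unset Strict Implicit. Unset Printing Implicit Defensive.
Local Open Scope classical_set_scope.

Definition T2w := cantor_space.
Definition clopen2w (U : set T2w) : Prop := open U /\ closed U.

Inductive natinf : Type := NFin of nat | NInf.

Definition nle (a b : natinf) : Prop :=
  match a, b with
  | _, NInf => True
  | NInf, NFin _ => False
  | NFin m, NFin n => (m <= n)%N
  end.
Definition nlt (a b : natinf) : Prop := nle a b /\ a <> b.
Definition nadd (a b : natinf) : natinf :=
  match a, b with
  | NFin m, NFin n => NFin (m + n)
  | _, _ => NInf
  end.

(* sup S >= v, where sup is the least upper bound in omega \cup {infinity} *)
Definition sup_ge (S : set natinf) (v : natinf) : Prop :=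
  forall w, (forall s, S s -> nle s w) -> nle v w.

Definition mu_monotone (mu : set T2w -> natinf) : Prop :=
  forall a b, a `<=` b -> nle (mu a) (mu b).
Definition mu_subadditive (mu : set T2w -> natinf) : Prop :=
  forall a b, nle (mu (a `|` b)) (nadd (mu a) (mu b)).

Definition C := (nat * T2w)%type.
Definition Cn (n : nat) : set C := [set p | p.1 = n].
Definition sect (n : nat) (A : set C) : set T2w := [set x | A (n, x)].
Definition mun (mu : set T2w -> natinf) (n : nat) (A : set C) : natinf :=
  mu (sect n A).
(* A clopen2w in C_n (A a subset of C_n), via the homeomorphism x |-> <n,x> *)
Definition clopenCn (n : nat) (A : set C) : Prop := A `<=` Cn n /\ clopen2w (sect n A).

(* A partial function e with nonempty values e(n) \subseteq C_n is encoded as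
   a total function nat -> set C which is empty exactly outside dom(e). *)
Definition fam := nat -> set C.
Definition dom (e : fam) : set nat := [set n | e n !=set0].

Definition in_E (e : fam) : Prop :=
  infinite_set (dom e) /\ forall n, e n `<=` Cn n.
Definition in_O (o : fam) : Prop :=
  in_E o /\ forall n, dom o n -> clopenCn n (o n).

Definition sqsub (f g : fam) : Prop :=
  dom f `<=` dom g /\ forall n, dom f n -> f n `<=` g n.
Definition sqsub_star (f g : fam) : Prop :=
  finite_set (dom f `\` dom g) /\
  finite_set [set n | dom f n /\ dom g n /\ ~ (f n `<=` g n)].
Definition perp (f g : fam) : Prop :=
  finite_set [set n | dom f n /\ dom g n /\ (f n `&` g n) !=set0].

(* h -. o : domain {n in dom h | h(n) not subset of o(n)}, value h(n) \ o(n)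
   (with o(n) = empty when n \notin dom o) *)
Definition dotminus (h o : fam) : fam := fun n => h n `\` o n.

Definition GG (mu : set T2w -> natinf) (M : nat) : set fam :=
  [set g | in_E g /\ forall n, dom g n -> nle (mun mu n (g n)) (NFin M)].
Definition HH (mu : set T2w -> natinf) : set fam :=
  [set h | in_E h /\ forall k : nat, exists N : nat,
      forall n, dom h n -> (N <= n)%N -> nle (NFin k) (mun mu n (h n))].

Definition countably_infinite {U} (A : set U) : Prop :=
  countable A /\ infinite_set A.

Definition dense_fam (H : set fam) : Prop :=
  forall o, in_O o -> exists h, H h /\ sqsub h o.
Definition shrinkable_fam (H : set fam) : Prop :=
  forall h, H h -> forall O : set fam, O `<=` in_O -> countably_infinite O ->
    exists h', H h' /\ sqsub h' h /\ forall o, O o -> sqsub_star h' o \/ perp h' o.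
Definition large_fam (G H : set fam) : Prop :=
  forall g, G g -> forall Hs : set fam, Hs `<=` H -> countably_infinite Hs ->
    exists o, in_O o /\ sqsub g o /\ forall h, Hs h -> H (dotminus h o).

From mathcomp Require Import all_boot all_classical all_reals all_analysis.
From mathcomp Require Import zify finmap.
Set Implicit Arguments.
Unset Strict Implicit.
Local Open Scope classical_set_scope.

(* A clopen family lies in [HH mu] itself, since nonempty clopen sets have
   infinite [mu]; this gives density.

   Shrinkability needs only monotonicity and subadditivity.  For each [n] one
   of [h n `&` o n] and [h n `\` o n] carries half of [mu (h n)], and the
   same side wins for infinitely many [n]; keeping that side shrinks [h]
   inside [HH mu] to a family contained in, or disjoint from, [o].  Doing this
   along an enumeration [o_0, o_1, ...] gives a descending sequence in
   [HH mu], and the diagonal family that takes from the [k]-th term one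
   coordinate where [mu] is at least [k] is eventually below every term.

   Largeness: hypothesis (ii) lets a clopen neighbourhood [U] of [a], where
   [mu a <= M], keep [mu (b `\` U) >= k] whenever [mu b >= k + M].
   Intersecting finitely many of them yields, for each [n], one clopen [U_n]
   around [g n] serving all [j, k <= n] for an enumeration [h_0, h_1, ...];
   then [o n = {n} x U_n] works, as [mu (h_j n `\` U_n)] tends to infinity. *)

Lemma nle_trans a b c : nle a b -> nle b c -> nle a c.
Proof. by case: a; case: b; case: c => //= *; lia. Qed.

Lemma nle_total a b : nle a b \/ nle b a.
Proof. case: a; case: b => //=; try by [left | right]. move=> m n; lia. Qed.

Lemma nle0 a : nle (NFin 0) a.
Proof. by case: a. Qed.

Lemma nleD2l a b c : nle b c -> nle (nadd a b) (nadd a c).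
Proof. by case: a; case: b; case: c => //= *; lia. Qed.

Lemma nle_double k x : nle (NFin (k + k)) (nadd x x) -> nle (NFin k) x.
Proof. by case: x => //= *; lia. Qed.

Lemma infinite_natP (S : set nat) :
  infinite_set S <-> forall N, exists2 n, (N <= n)%N & S n.
Proof.
split=> [Sinf N | Sunb /finite_fsetP[X SX]].
  have /infinite_setN0[n [Sn nIN]] := infinite_setD Sinf (finite_II N).
  by exists n => //; rewrite leqNgt; apply/negP.
have [n + Sn] := Sunb (\max_(x <- X) x).+1.
rewrite SX in Sn; apply/negP; rewrite -ltnNge ltnS.
exact: (@leq_bigmax_seq _ _ xpredT id n Sn isT).
Qed.

Lemma bounded_finite_set (S : set nat) N :
  (forall n, S n -> (n < N)%N) -> finite_set S.
Proof. by move=> SN; apply: sub_finite_set (finite_II N) => n /SN. Qed.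

Lemma countable_range T (A : set T) :
  countable A -> A !=set0 -> exists f : nat -> T, A = range f.
Proof.
by case/pfcard_geP => [-> [] | /surjfunPex[f ->] _]; last exists f.
Qed.

Lemma clopen_fin_bigcap (T : topologicalType) (I : choiceType) (D : set I)
    (U : I -> set T) :
  finite_set D -> (forall i, D i -> clopen (U i)) ->
  clopen (\bigcap_(i in D) U i).
Proof.
move=> Dfin DU; split; last by apply: closed_bigI => i /DU[].
rewrite -closedC setC_bigcap; apply: closed_bigcup => // i /DU[Uo _].
exact: open_closedC.
Qed.

Lemma sqsubP (f g : fam) : sqsub f g <-> forall n, f n `<=` g n.
Proof.
split=> [[_ fg] n p fnp | fg]; first by apply: fg => //; exists p.
by split=> [n [p /fg gp] | n _]; [exists p | exact: fg].
Qed.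

Definition restrict_fam (S : set nat) (g : fam) : fam :=
  fun n => [set p | S n /\ g n p].

Section HHFamilies.
Variable mu : set T2w -> natinf.

Lemma dense_HH : (forall U, clopen2w U -> U !=set0 -> mu U = NInf) ->
  dense_fam (HH mu).
Proof.
move=> clopen_inf o [[oinf oC] oclopen]; exists o.
split; last by apply/sqsubP => n p.
split=> // k; exists 0 => n [[m x] op] _.
have mn : m = n := oC n _ op; subst m.
rewrite /mun clopen_inf //; last by exists x.
by have [] := oclopen n (ex_intro _ _ op).
Qed.

Hypothesis mono : mu_monotone mu.
Hypothesis subadd : mu_subadditive mu.

Lemma mu_sect_set0 n (A : set C) (B : set T2w) :
  ~ (A !=set0) -> nle (mu (sect n A)) (mu B).
Proof. by move=> A0; apply: mono => x Ax; case: A0; exists (n, x). Qed.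

Lemma mun_subadd n (A B B' : set C) :
  A `<=` B `|` B' -> nle (mun mu n A) (nadd (mun mu n B) (mun mu n B')).
Proof. by move=> AB; apply: nle_trans _ (subadd _ _); apply: mono => x /AB. Qed.

Lemma HH_witness h : HH mu h -> forall k N,
  exists n, [/\ (N <= n)%N, dom h n & nle (NFin k) (mun mu n (h n))].
Proof.
move=> [[/infinite_natP hinf _] hk] k N; have [N' hN'] := hk k.
have [n Nn hn] := hinf (maxn N N').
by exists n; split => //; [lia | apply: hN' => //; lia].
Qed.

Definition heavy (g g' : fam) : set nat :=
  [set n | g n !=set0 /\ nle (mun mu n (g' n)) (mun mu n (g n))].

Lemma heavy_cover (h g g' : fam) n : h n `<=` g n `|` g' n -> dom h n ->
  heavy g g' n \/ heavy g' g n.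
Proof.
wlog le : g g' / nle (mun mu n (g n)) (mun mu n (g' n)).
  move=> wlog_le hg dh.
  have [le|le] := nle_total (mun mu n (g n)) (mun mu n (g' n)).
    exact: wlog_le.
  by rewrite or_comm; apply: wlog_le => // p /hg[]; [right | left].
move=> hg [p /hg hp].
have [g'0|g'0] := pselect (g' n !=set0); first by right; split.
left; split; last exact: mu_sect_set0.
by case: hp => [gp | g'p]; [exists p | case: g'0; exists p].
Qed.

Lemma HH_restrict_heavy (h g g' : fam) : HH mu h ->
  (forall n, g n `<=` h n) -> (forall n, h n `<=` g n `|` g' n) ->
  infinite_set (heavy g g') -> HH mu (restrict_fam (heavy g g') g).
Proof.
move=> [[_ hC] hk] gh hg heavy_inf; split; first split.
- apply: (sub_infinite_set _ heavy_inf) => n hn.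
  by have [[p gp] _] := hn; exists p.
- by move=> n p [_ /gh /hC].
move=> k; have [N hN] := hk (k + k); exists N => n [p [hn gp]] Nn.
have [_ le] := hn.
have gsub : sect n (g n) `<=` sect n (restrict_fam (heavy g g') g n).
  by move=> x gx; split.
apply: nle_trans _ (mono gsub); apply: nle_double.
apply: nle_trans (hN n _ Nn) _; first by exists p; exact: gh.
exact: nle_trans (mun_subadd n (hg n)) (nleD2l _ le).
Qed.

Lemma HH_split h : HH mu h -> forall A : nat -> set C,
  exists h', [/\ HH mu h', sqsub h' h &
    (forall n, h' n `<=` A n) \/ (forall n, h' n `&` A n = set0)].
Proof.
move=> Hh A; have [[hinf _] _] := Hh.
pose hI : fam := fun n => h n `&` A n; pose hD : fam := fun n => h n `\` A n.
have hIhD n : h n `<=` hI n `|` hD n.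
  by move=> p hp; have [Ap|nAp] := pselect (A n p); [left | right].
have hDhI n : h n `<=` hD n `|` hI n by move=> p /hIhD[]; [right | left].
have [Ifin|Iinf] := pselect (finite_set (heavy hI hD)); last first.
  exists (restrict_fam (heavy hI hD) hI); split.
  - by apply: (HH_restrict_heavy Hh) => // n p [].
  - by apply/sqsubP => n p [_ []].
  - by left => n p [_ []].
have Dinf : infinite_set (heavy hD hI).
  move=> Dfin; apply: hinf; apply: sub_finite_set (_ : finite_set (_ `|` _)).
    by move=> n; apply: heavy_cover.
  by rewrite finite_setU.
exists (restrict_fam (heavy hD hI) hD); split.
- by apply: (HH_restrict_heavy Hh) => // n p [].
- by apply/sqsubP => n p [_ []].
- by right => n; apply/seteqP; split => // p [[_ [_ nAp]] Ap].
Qed.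

Lemma HH_descending h : HH mu h -> forall A : nat -> nat -> set C,
  exists H : nat -> fam, [/\ H 0 = h, forall k, HH mu (H k),
    forall k, sqsub (H k.+1) (H k) &
    forall k, (forall n, H k.+1 n `<=` A k n) \/
              (forall n, H k.+1 n `&` A k n = set0)].
Proof.
move=> Hh A.
have /choice[next nextP] : forall kg : nat * fam, exists g', HH mu kg.2 ->
    [/\ HH mu g', sqsub g' kg.2 &
      (forall n, g' n `<=` A kg.1 n) \/ (forall n, g' n `&` A kg.1 n = set0)].
  move=> [k g]; have [Hg|nHg] := pselect (HH mu g); last by exists g => /nHg.
  by have [g' ?] := HH_split Hg (A k); exists g'.
pose H := fix H k := if k is k'.+1 then next (k', H k') else h.
have HH_H k : HH mu (H k) by elim: k => //= k IH; have [] := nextP (k, H k) IH.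
by exists H; split => // k; have [] := nextP (k, H k) (HH_H k).
Qed.

Lemma HH_diagonal (H : nat -> fam) :
  (forall k, HH mu (H k)) -> (forall k, sqsub (H k.+1) (H k)) ->
  exists h', [/\ HH mu h', sqsub h' (H 0) &
    forall j, exists N, forall n, (N <= n)%N -> h' n `<=` H j n].
Proof.
move=> HH_H decr.
have Hdecr n j k : (j <= k)%N -> H k n `<=` H j n.
  apply: (homo_leq (f := H^~ n) (r := fun X Y => Y `<=` X)).
  - by move=> X; exact: subset_refl.
  - by move=> Y X Z XY YZ; apply: subset_trans YZ XY.
  - by move=> i; exact: (sqsubP _ _).1 (decr i) n.
have /choice[pick pickP] : forall kN : nat * nat, exists n,
    [/\ (kN.2 <= n)%N, dom (H kN.1) n & nle (NFin kN.1) (mun mu n (H kN.1 n))].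
  by move=> [k N]; apply: HH_witness.
pose nk := fix nk k := if k is k'.+1 then pick (k, (nk k').+1) else pick (0, 0).
have nk_lt k : (nk k < nk k.+1)%N by have [] := pickP (k.+1, (nk k).+1).
have nk_mono : {mono nk : j k / (j <= k)%N}.
  exact: leq_mono (homo_ltn ltn_trans nk_lt).
have nk_ge k : (k <= nk k)%N by elim: k => // k IH; have := nk_lt k; lia.
have nkP k : dom (H k) (nk k) /\ nle (NFin k) (mun mu (nk k) (H k (nk k))).
  case: k => [|k]; first by have [] := pickP (0, 0).
  by have [] := pickP (k.+1, (nk k).+1).
pose h' : fam := fun n => [set p | exists2 k, nk k = n & H k n p].
have h'_sub j n : (nk j <= n)%N -> h' n `<=` H j n.
  by move=> le p [k ek]; apply: Hdecr; rewrite -nk_mono ek.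
exists h'; split.
- split; first split.
  + apply/infinite_natP => N; exists (nk N); first exact: nk_ge.
    by have [[p Hp] _] := nkP N; exists p, N.
  + by move=> n p [k _ Hp]; have [[_ HC] _] := HH_H k; exact: HC Hp.
  move=> K; exists (nk K) => n [p [k ek Hp]] le.
  have Kk : (K <= k)%N by rewrite -nk_mono ek.
  have Hh' : sect n (H k n) `<=` sect n (h' n) by move=> x Hx; exists k.
  apply: nle_trans _ (mono Hh'); rewrite -ek; apply: nle_trans _ (nkP k).2.
  by rewrite /=; lia.
- by apply/sqsubP => n p [k _]; apply: Hdecr.
- by move=> j; exists (nk j); apply: h'_sub.
Qed.

Lemma shrinkable_HH : shrinkable_fam (HH mu).
Proof.
move=> h Hh O _ [cO iO].
have [oseq Oseq] := countable_range cO (infinite_setN0 iO).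
have [H [H0 HH_H decr sep]] := HH_descending Hh oseq.
have [h' [Hh' h'H0 h'H]] := HH_diagonal HH_H decr.
exists h'; split=> //; split; first by rewrite -H0.
move=> o; rewrite Oseq => -[j _ <-]; have [N late] := h'H j.+1.
case: (sep j) => [inside | disj]; [left; split | right].
- apply: (@bounded_finite_set _ N) => n [[p h'p] ndo]; rewrite ltnNge.
  by apply/negP => Nn; apply: ndo; exists p; exact: inside _ _ (late n Nn p h'p).
- apply: (@bounded_finite_set _ N) => n [_ [_ nsub]]; rewrite ltnNge.
  by apply/negP => Nn; apply: nsub => p /(late n Nn)/inside.
- apply: (@bounded_finite_set _ N) => n [_ [_ [p [h'p op]]]]; rewrite ltnNge.
  apply/negP => Nn; have : (H j.+1 n `&` oseq j n) p.
    by split => //; exact: late n Nn p h'p.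
  by rewrite disj.
Qed.

End HHFamilies.

Section Largeness.
Variables (M : nat) (mu : set T2w -> natinf).
Hypothesis mono : mu_monotone mu.
Hypothesis sep : forall a b : set T2w,
  nle (mu a) (NFin M) -> nlt (NFin M) (mu b) ->
  sup_ge [set s | exists U : set T2w, clopen2w U /\ a `<=` U /\
                    s = nadd (mu (b `\` U)) (NFin M)] (mu b).

Lemma clopen_sep a b K : nle (mu a) (NFin M) -> nle (NFin (K + M)) (mu b) ->
  exists U, [/\ clopen2w U, a `<=` U & nle (NFin K) (mu (b `\` U))].
Proof.
move=> aM; case: K => [|K] bK.
  by exists setT; split; [exact: clopenT | | exact: nle0].
have bM : nlt (NFin M) (mu b).
  split; first by apply: nle_trans _ bK; rewrite /=; lia.
  by move=> bE; rewrite -bE /= in bK; lia.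
apply: contrapT => noU.
have bound s : [set s | exists U : set T2w, clopen2w U /\ a `<=` U /\
    s = nadd (mu (b `\` U)) (NFin M)] s -> nle s (NFin (K + M)).
  move=> [U [cU [aU ->]]].
  have : ~ nle (NFin K.+1) (mu (b `\` U)) by move=> le; apply: noU; exists U.
  by case: (mu _) => [m|] /=; [lia | case].
by have := nle_trans bK (sep aM bM bound); rewrite /=; lia.
Qed.

Lemma clopen_sep_fin (I : choiceType) (D : set I) a (b : I -> set T2w)
    (K : I -> nat) :
  finite_set D -> nle (mu a) (NFin M) ->
  exists U, [/\ clopen2w U, a `<=` U & forall i, D i ->
    nle (NFin (K i + M)) (mu (b i)) -> nle (NFin (K i)) (mu (b i `\` U))].
Proof.
move=> Dfin aM.
have /choice[V VP] : forall i, exists V, [/\ clopen2w V, a `<=` V &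
    nle (NFin (K i + M)) (mu (b i)) -> nle (NFin (K i)) (mu (b i `\` V))].
  move=> i; have [bK|nbK] := pselect (nle (NFin (K i + M)) (mu (b i))).
    by have [V [? ? ?]] := clopen_sep aM bK; exists V.
  by exists setT; split=> [| // | /nbK[]]; exact: clopenT.
exists (\bigcap_(i in D) V i); split.
- by apply: clopen_fin_bigcap => // i _; have [] := VP i.
- by move=> x ax i _; have [_ aV _] := VP i; exact: aV.
- move=> i Di bK; have [_ _ /(_ bK) le] := VP i; apply: nle_trans le _.
  by apply: mono; apply: setDS; exact: bigcap_inf.
Qed.

Lemma HH_dotminus h o : nle (mu set0) (NFin M) -> HH mu h ->
  (forall k, exists N, forall n, (N <= n)%N ->
     nle (NFin (k + M)) (mun mu n (h n)) ->
     nle (NFin k) (mun mu n (dotminus h o n))) ->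
  HH mu (dotminus h o).
Proof.
move=> mu0 [[hinf hC] hk] ho.
have grow k : exists N, forall n, dom h n -> (N <= n)%N ->
    nle (NFin k) (mun mu n (dotminus h o n)).
  have [N1 hN1] := hk (k + M); have [N2 hN2] := ho k.
  by exists (maxn N1 N2) => n dn le; apply: hN2; [lia | apply: hN1 => //; lia].
split; first split.
- apply/infinite_natP => N; have [N' hN'] := grow M.+1.
  have /infinite_natP/(_ (maxn N N'))[n le dn] := hinf.
  exists n; first lia.
  apply: contrapT => nd.
  have mu_n := nle_trans (mu_sect_set0 mono n _ nd) mu0.
  by have := nle_trans (hN' n dn ltac:(lia)) mu_n; rewrite /=; lia.
- by move=> n p [/hC].
move=> k; have [N hN] := grow k; exists N => n [p [hp _]]; apply: hN.
by exists p.
Qed.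

Lemma large_HH : large_fam (GG mu M) (HH mu).
Proof.
move=> g [[ginf gC] gM] Hs HsH [cHs iHs].
have [f Hsf] := countable_range cHs (infinite_setN0 iHs).
have mu0 : nle (mu set0) (NFin M).
  have [n0 dn0] := infinite_setN0 ginf.
  exact: nle_trans (mono (sub0set _)) (gM n0 dn0).
have gsect n : nle (mun mu n (g n)) (NFin M).
  have [dn|nd] := pselect (dom g n); first exact: gM.
  exact: nle_trans (mu_sect_set0 mono n _ nd) mu0.
have /choice[U UP] : forall n, exists U, [/\ clopen2w U, sect n (g n) `<=` U &
    forall jk, (`I_n.+1 `*` `I_n.+1) jk ->
      nle (NFin (jk.2 + M)) (mun mu n (f jk.1 n)) ->
      nle (NFin jk.2) (mu (sect n (f jk.1 n) `\` U))].
  move=> n; apply: (clopen_sep_fin (fun jk => sect n (f jk.1 n)) snd _ (gsect n)).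
  by apply: finite_setX; exact: finite_II.
pose o : fam := fun n => [set p | p.1 = n /\ U n p.2].
have g_o n : g n `<=` o n.
  move=> [m x] gp; have mn : m = n := gC n _ gp; subst m.
  by split => //; have [_ gU _] := UP n; exact: gU.
exists o; split; [split; first split | split; first by apply/sqsubP].
- by apply: (sub_infinite_set _ ginf) => n [p /g_o op]; exists p.
- by move=> n p [].
- move=> n _; split; first by move=> p [].
  have -> : sect n (o n) = U n by apply/seteqP; split => x //=; case.
  by have [] := UP n.
move=> h Hsh; have Hh := HsH h Hsh; rewrite Hsf in Hsh; case: Hsh => j _ fj.
subst h; apply: HH_dotminus mu0 Hh _ => k; exists (maxn j k) => n le fK.
have [_ _ /(_ (j, k)) Usep] := UP n.
apply: nle_trans (Usep _ fK) _; first by split => /=; lia.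
by apply: mono => x [fx nUx]; split => // -[_ /nUx].
Qed.

End Largeness.

Unset Implicit Arguments.

Theorem theorem2p5 (M : nat) (mu : set T2w -> natinf) :
  mu_monotone mu -> mu_subadditive mu ->
  (forall U : set T2w, clopen2w U -> U !=set0 -> mu U = NInf) ->
  (forall a b : set T2w, nle (mu a) (NFin M) -> nlt (NFin M) (mu b) ->
     sup_ge [set s | exists U : set T2w, clopen2w U /\ a `<=` U /\
                       s = nadd (mu (b `\` U)) (NFin M)] (mu b)) ->
  dense_fam (HH mu) /\ shrinkable_fam (HH mu) /\ large_fam (GG mu M) (HH mu).
Proof.
move=> mono subadd clopen_inf sep.
split; first exact: dense_HH.
split; first exact: shrinkable_HH.
exact: large_HH.
Qed.
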